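(* (a) The Baire space $\mathcal{N}$ has a $\pi$-tree $\mathbf{F}$ such that $\mathrm{cofin}\,\omega\gg\mathrm{Rise}_{\mathbf{F}}(\mathcal{N})$. (b) The Sorgenfrey line $\mathcal{R}_{\mathcal{S}}$ has a $\pi$-tree $\mathbf{G}$ such that $\mathrm{cofin}\,\omega\gg\mathrm{Rise}_{\mathbf{G}}(\mathcal{R}_{\mathcal{S}})$. (c) If $X\subseteq\mathcal{R}_{\mathcal{S}}$ and $\mathcal{R}_{\mathcal{S}}\setminus X$ is at most countable, then the subspace $X$ has a $\pi$-tree $\mathbf{H}$ such that $\mathrm{cofin}\{2n+1:n\in\omega\}\gg\mathrm{Rise}_{\mathbf{H}}(X)$.
   Context: $\mathcal{N}$ is ${}^{\omega}\omega$ with the product topology ($\omega$ discrete); $\mathcal{R}_{\mathcal{S}}$ is the real line with the topology generated by half-open intervals $[a,b)$. For a set $B$, $\mathrm{cofin}\,B=\{B\setminus F: F\subseteq B\text{ finite}\}$. Neighbourhoods are not necessarily open. $\omega=\{0,1,2,\dots\}$, ${}^{<\omega}\omega$ is the set of finite sequences of natural numbers. A tree is a strict partial order in which the set of predecessors of every node is well-ordered; $\mathrm{height}(x)$ is the ordinal isomorphic to the set of predecessors of $x$; a branch is a maximal chain; $\mathrm{sons}(x)$ is the set of immediate successors of $x$; $0$ denotes the least node. A foliage tree is a pair $\mathbf{F}=(T,l)$ with $T$ a tree (skeleton) and $l$ a function on its nodes, $\mathbf{F}_x:=l(x)$; tree notions apply via the skeleton. $\mathrm{shoot}_{\mathbf{F}}(v)=\{\bigcup_{x\in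 C}\mathbf{F}_x: C\text{ a cofinite subset of }\mathrm{sons}_{\mathbf{F}}(v)\}$; $\mathrm{scope}_{\mathbf{F}}(p)=\{x:p\in\mathbf{F}_x\}$. For families $\gamma,\delta$ of sets, $\gamma\gg\delta$ means every nonempty $D\in\delta$ contains some nonempty $G\in\gamma$. $\mathrm{rise}_{\mathbf{F}}(p,U)=\{\mathrm{height}_{\mathbf{F}}(v): v\in\mathrm{scope}_{\mathbf{F}}(p),\ \mathrm{shoot}_{\mathbf{F}}(v)\gg\{U\}\}$; $\mathrm{Rise}_{\mathbf{F}}(X)=\{\mathrm{rise}_{\mathbf{F}}(p,U):p\in X,\ U\text{ a neighbourhood of }p\text{ in }X\}$. $\mathbf{F}$ is locally strict if each non-maximal leaf $\mathbf{F}_x$ is the disjoint union of $\mathbf{F}_s$, $s\in\mathrm{sons}(x)$; has strict branches if it has a node and for each branch $B$, $\bigcap_{x\in B}\mathbf{F}_x$ is a singleton; is open in $X$ if all leaves are open in $X$; is a foliage $\omega,\omega$-tree if its skeleton is order-isomorphic to $({}^{<\omega}\omega,\subsetneq)$. A Baire foliage tree on $X$ is an open in $X$, locally strict foliage $\omega,\omega$-tree with strict branches and $\mathbf{F}_{0_{\mathbf{F}}}=X$. $\mathbf{F}$ grows into $X$ if for every $p\in X$ and neighbourhood $U$ of $p$ there is $z\in\mathrm{scope}_{\mathbf{F}}(p)$ with $\mathrm{shoot}_{\mathbf{F}}(z)\gg\{U\}$. A $\pi$-tree on $X$ is a Baire foliage tree on $X$ that grows into $X$. *)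

From HB Require Import structures.
From mathcomp Require Import all_boot all_order all_algebra.
From mathcomp Require Import boolp classical_sets cardinality reals.
Set Implicit Arguments. Unset Strict Implicit. Unset Printing Implicit Defensive.
Import Order.TTheory GRing.Theory Num.Theory.
Local Open Scope classical_set_scope.
Local Open Scope ring_scope.

Definition baire_open (U : set (nat -> nat)) : Prop :=
  forall p, U p -> exists n : nat,
    forall q : nat -> nat, (forall i, (i < n)%N -> q i = p i) -> U q.

Definition sorgenfrey_open (R : realType) (U : set R) : Prop :=
  forall p, U p -> exists b : R, p < b /\ [set x | p <= x /\ x < b] `<=` U.

Definition subspace_open (T : Type) (op : set T -> Prop) (X : set T)
  (U : set T) : Prop := exists V, op V /\ U = V `&` X.

Definition nbhd_in (T : Type) (opX : set T -> Prop) (X : set T)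
  (p : T) (U : set T) : Prop :=
  U `<=` X /\ exists W, opX W /\ W p /\ W `<=` U.

(* ---------- Foliage omega,omega-trees ----------
   The skeleton is ({}^{<omega}omega, strict prefix) itself; a foliage tree
   is a map F : seq nat -> set T (F x = leaf at node x). *)
Definition sprefix (s t : seq nat) : Prop := prefix s t /\ s <> t.

Definition height (s : seq nat) : nat := size s.

Definition sons (v : seq nat) : set (seq nat) :=
  [set t | exists n : nat, t = rcons v n].

Definition chain (C : set (seq nat)) : Prop :=
  forall x y, C x -> C y -> x = y \/ sprefix x y \/ sprefix y x.

Definition branch (B : set (seq nat)) : Prop :=
  chain B /\ forall C, chain C -> B `<=` C -> C = B.

Definition gg (T : Type) (gamma delta : set (set T)) : Prop :=
  forall D, delta D -> D !=set0 ->
    exists G, gamma G /\ G !=set0 /\ G `<=` D.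

Definition cofin (T : Type) (B : set T) : set (set T) :=
  [set C | exists F, finite_set F /\ F `<=` B /\ C = B `\` F].

Definition shoot (T : Type) (F : seq nat -> set T) (v : seq nat)
  : set (set T) :=
  [set U | exists C, C `<=` sons v /\ finite_set (sons v `\` C) /\
                     U = \bigcup_(x in C) F x].

Definition scope (T : Type) (F : seq nat -> set T) (p : T) : set (seq nat) :=
  [set x | F x p].

Definition rise (T : Type) (F : seq nat -> set T) (p : T) (U : set T)
  : set nat :=
  [set n | exists v, scope F p v /\ gg (shoot F v) [set U] /\ n = height v].

Definition Rise (T : Type) (opX : set T -> Prop) (X : set T)
  (F : seq nat -> set T) : set (set nat) :=
  [set A | exists p U, X p /\ nbhd_in opX X p U /\ A = rise F p U].

Definition locally_strict (T : Type) (F : seq nat -> set T) : Prop :=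
  forall x, (exists y, sprefix x y) ->
    F x = \bigcup_(s in sons x) F s /\
    (forall s s', sons x s -> sons x s' -> s <> s' -> F s `&` F s' = set0).

Definition strict_branches (T : Type) (F : seq nat -> set T) : Prop :=
  (exists x : seq nat, True) /\
  forall B, branch B -> exists p : T, \bigcap_(x in B) F x = [set p].

Definition open_in (T : Type) (opX : set T -> Prop) (F : seq nat -> set T)
  : Prop := forall x, opX (F x).

Definition baire_foliage_tree (T : Type) (opX : set T -> Prop) (X : set T)
  (F : seq nat -> set T) : Prop :=
  open_in opX F /\ locally_strict F /\ strict_branches F /\ F [::] = X.

Definition grows_into (T : Type) (opX : set T -> Prop) (X : set T)
  (F : seq nat -> set T) : Prop :=
  forall p U, X p -> nbhd_in opX X p U ->
    exists z, scope F p z /\ gg (shoot F z) [set U].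

Definition pi_tree (T : Type) (opX : set T -> Prop) (X : set T)
  (F : seq nat -> set T) : Prop :=
  baire_foliage_tree opX X F /\ grows_into opX X F.

From HB Require Import structures.
From mathcomp Require Import all_boot all_order all_algebra.
From mathcomp Require Import mathcomp_extra boolp classical_sets cardinality reals.
From mathcomp Require Import ring lra.
Import Order.TTheory GRing.Theory Num.Theory.
Set Implicit Arguments. Unset Strict Implicit.
Local Open Scope classical_set_scope.
Local Open Scope ring_scope.

(* For the Baire space the leaves are the basic cylinders: a neighbourhood of p
   containing all sequences that agree with p up to N contains, for every node
   of height n >= N on the branch of p, every son of that node.

   On a subspace X of the Sorgenfrey line the leaves are X cut by half-open
   intervals [a, b): first the unit intervals, then each interval is split into
   countably many pieces of at most half its length that accumulate at b.  If a
   neighbourhood of p contains [p, p + e) and the node interval has length < e,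
   all but finitely many pieces lie in [p, b), so every such level is in the rise.
   When X misses countably many points, the even levels instead split [a, b)
   around the next missing point d (pieces of [a, d) accumulating at d and of
   ]d, b) accumulating at d), so no branch can shrink to a point outside X; the
   plain splits at the odd levels keep the right endpoints strictly decreasing,
   which makes every branch meet in exactly one point. *)

Lemma prefix_size_eq (T : eqType) (s t : seq T) :
  prefix s t -> size s = size t -> s = t.
Proof.
move=> /prefixP [u ->]; rewrite size_cat -[LHS]addn0 => /eqP.
by rewrite eqn_add2l eq_sym size_eq0 => /eqP ->; rewrite cats0.
Qed.

Lemma prefix_nth (T : eqType) (x0 : T) (s t : seq T) i :
  prefix s t -> (i < size s)%N -> nth x0 s i = nth x0 t i.
Proof. by move=> /prefixP [u ->] lti; rewrite nth_cat lti. Qed.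

Lemma prefix_total (T : eqType) (x y z : seq T) :
  prefix x z -> prefix y z -> prefix x y \/ prefix y x.
Proof.
rewrite !prefixE => /eqP hx /eqP hy.
case: (leqP (size x) (size y)) => xy; [left | right]; apply/eqP.
- by rewrite -hy take_takel // hx.
- by rewrite -hx take_takel ?hy // ltnW.
Qed.

Lemma chainE (C : set (seq nat)) :
  chain C <-> forall x y, C x -> C y -> prefix x y \/ prefix y x.
Proof.
split=> chC x y Cx Cy.
  by case: (chC x y Cx Cy) => [->|[[? _]|[? _]]]; [left; exact: prefix_refl|left|right].
have [->|neq] := eqVneq x y; first by left.
by right; case: (chC x y Cx Cy) => ?; [left|right]; split=> // eq;
  move: neq; rewrite eq eqxx.
Qed.

Section Branch.
Variable B : set (seq nat).
Hypothesis branchB : branch B.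

Let chainB : forall x y, B x -> B y -> prefix x y \/ prefix y x.
Proof. exact/chainE/branchB.1. Qed.

Lemma branch_maximal t : (forall x, B x -> prefix x t \/ prefix t x) -> B t.
Proof.
move=> cmpt; suff <- : B `|` [set t] = B by right.
apply: branchB.2 => [|x Bx]; last by left.
apply/chainE => x y [Bx|->] [By|->]; first exact: chainB.
- exact: cmpt.
- by case: (cmpt y By); [right|left].
- by left; exact: prefix_refl.
Qed.

Lemma branch_prefix s t : B s -> prefix t s -> B t.
Proof.
move=> Bs ts; apply: branch_maximal => x Bx.
case: (chainB Bx Bs) => [xs|sx]; first exact: prefix_total xs ts.
by right; exact: prefix_trans ts sx.
Qed.

Lemma branch_level_uniq s t : B s -> B t -> size s = size t -> s = t.
Proof.
move=> Bs Bt st; case: (chainB Bs Bt) => [/prefix_size_eq-> //|ts].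
exact/esym/(prefix_size_eq ts).
Qed.

Lemma branch_level n : exists s, B s /\ size s = n.
Proof.
elim: n => [|n [s [Bs <-]]].
  by exists [::]; split=> //; apply: branch_maximal => x _; right; exact: prefix0s.
have [[t [Bt st]]|] := pselect (exists t, B t /\ (size s < size t)%N).
  exists (take (size s).+1 t); split; first exact: branch_prefix Bt (prefix_take _ _).
  by rewrite size_takel.
move=> noLonger; exists (rcons s 0%N); split; last by rewrite size_rcons.
apply: branch_maximal => x Bx; left.
case: (chainB Bx Bs) => [xs|sx]; first exact: prefix_trans xs (prefix_rcons _ _).
suff -> : x = s by exact: prefix_rcons.
apply/esym/(prefix_size_eq sx)/eqP; rewrite eqn_leq size_prefix //= leqNgt.
by apply/negP => ltsx; apply: noLonger; exists x.
Qed.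

Lemma branchP : exists g : nat -> nat, forall s, B s <-> exists n, s = mkseq g n.
Proof.
pose h n := xget [::] [set s | B s /\ size s = n].
have hP n : B (h n) /\ size (h n) = n by exact: xgetPex (branch_level n).
exists (fun i => nth 0%N (h i.+1) i).
have hE n : h n = mkseq (fun i => nth 0%N (h i.+1) i) n.
  apply: (@eq_from_nth _ 0%N); first by rewrite size_mkseq (hP n).2.
  move=> i; rewrite (hP n).2 => ltin; rewrite nth_mkseq //.
  case: (chainB (hP n).1 (hP i.+1).1) => [/prefix_nth-> //|/prefix_nth <-//].
    by rewrite (hP n).2.
  by rewrite (hP i.+1).2.
move=> s; split=> [Bs|[n ->]]; last by rewrite -hE; exact: (hP n).1.
exists (size s); rewrite -hE; apply: branch_level_uniq (hP _).1 _ => //.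
by rewrite (hP _).2.
Qed.

End Branch.

Lemma strict_branches_mkseq T (F : seq nat -> set T) :
  (forall g : nat -> nat, exists p, \bigcap_n F (mkseq g n) = [set p]) ->
  strict_branches F.
Proof.
move=> gpoint; split=> [|B /branchP [g Bg]]; first by exists [::].
have [p gp] := gpoint g; exists p; rewrite -gp; apply/seteqP; split=> y Fy.
  by move=> n _; apply: Fy; apply/Bg; exists n.
by move=> x /Bg [n ->]; exact: Fy.
Qed.

Lemma rise_tail T (F : seq nat -> set T) p U v K :
  F v p -> F (rcons v K) !=set0 ->
  (forall k, (K <= k)%N -> F (rcons v k) `<=` U) -> rise F p U (size v).
Proof.
move=> Fvp [y FKy] tailU; exists v; split=> //; split=> // D -> _.
pose C := [set rcons v k | k in [set k | (K <= k)%N]].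
exists (\bigcup_(x in C) F x); split; last split.
- exists C; split; first by move=> x [k _ <-]; exists k.
  split=> //; apply: sub_finite_set (finite_image _ (finite_II K)).
  move=> x [[k ->] notC]; exists k => //=; rewrite ltnNge; apply/negP => Kk.
  by apply: notC; exists k.
- by exists y; exists (rcons v K) => //; exists K => /=.
- by move=> z [x [k Kk <-]]; exact: tailU.
Qed.

Lemma gg_cofin (B : set nat) (D : set (set nat)) :
  (forall N, exists n, (N <= n)%N /\ B n) ->
  (forall A, D A -> exists N, forall n, (N <= n)%N -> B n -> A n) ->
  gg (cofin B) D.
Proof.
move=> Bunb DB A DA _; have [N AN] := DB A DA.
exists (B `\` (B `&` `I_N)); split; last split.
- exists (B `&` `I_N); split; last by split=> // x [].
  exact: sub_finite_set (finite_II N).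
- have [n [Nn Bn]] := Bunb N; exists n; split=> // -[_ /=].
  by rewrite ltnNge Nn.
- move=> n [Bn notI]; apply: AN => //; rewrite leqNgt; apply/negP => ltnN.
  exact: notI.
Qed.

Lemma pi_tree_cofin T (opX : set T -> Prop) (X : set T) (F : seq nat -> set T)
    (B : set nat) :
  (forall N, exists n, (N <= n)%N /\ B n) -> baire_foliage_tree opX X F ->
  (forall p U, X p -> nbhd_in opX X p U ->
    exists N, forall n, (N <= n)%N -> B n -> rise F p U n) ->
  pi_tree opX X F /\ gg (cofin B) (Rise opX X F).
Proof.
move=> Bunb treeF riseF; split.
  split=> // p U Xp pU; have [N riseN] := riseF p U Xp pU.
  have [n [Nn Bn]] := Bunb N; have [v [? [? _]]] := riseN n Nn Bn.
  by exists v.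
by apply: gg_cofin => // _ [p [U [Xp [pU ->]]]]; exact: riseF.
Qed.

Definition cylinder (s : seq nat) : set (nat -> nat) :=
  [set q | forall i, (i < size s)%N -> q i = nth 0%N s i].

Lemma cylinder_rcons v k q :
  cylinder (rcons v k) q <-> cylinder v q /\ q (size v) = k.
Proof.
rewrite /cylinder size_rcons; split=> [qvk|[qv qk] i].
  split=> [i lti|]; last by rewrite qvk // nth_rcons ltnn eqxx.
  by rewrite qvk ?nth_rcons ?lti // ltnW.
rewrite ltnS leq_eqVlt nth_rcons => /orP [/eqP ->|lti]; first by rewrite ltnn eqxx.
by rewrite lti qv.
Qed.

Lemma cylinder_mkseq p n : cylinder (mkseq p n) p.
Proof. by move=> i; rewrite size_mkseq => lti; rewrite nth_mkseq. Qed.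

Lemma bigcap_cylinder g : \bigcap_n cylinder (mkseq g n) = [set g].
Proof.
apply/seteqP; split=> [q gq|_ ->]; last by move=> n _; exact: cylinder_mkseq.
apply: funext => i; have := gq i.+1 I i; rewrite size_mkseq nth_mkseq //.
exact.
Qed.

Lemma cylinder_sons v : cylinder v = \bigcup_(s in sons v) cylinder s.
Proof.
apply/seteqP; split=> [q qv|q [_ [k ->] /cylinder_rcons []] //].
by exists (rcons v (q (size v))); [exists (q (size v)) | exact/cylinder_rcons].
Qed.

Lemma cylinder_sons_disj v s s' : sons v s -> sons v s' -> s <> s' ->
  cylinder s `&` cylinder s' = set0.
Proof.
move=> [k ->] [k' ->] neq; apply/seteqP; split=> // q [].
by move=> /cylinder_rcons [_ qk] /cylinder_rcons [_ qk']; apply: neq; rewrite -qk -qk'.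
Qed.

Lemma cylinder_open s : subspace_open baire_open setT (cylinder s).
Proof.
exists (cylinder s); split; last by rewrite setIT.
by move=> p ps; exists (size s) => q qp i lti; rewrite qp //; exact: ps.
Qed.

Lemma rise_cylinder p U : nbhd_in (subspace_open baire_open setT) setT p U ->
  exists N, forall n, (N <= n)%N -> rise cylinder p U n.
Proof.
move=> [_ [_ [[V [openV ->]] [[Vp _] VU]]]]; have [N Np] := openV p Vp.
exists N => n Nn; rewrite -(size_mkseq p n).
apply: (@rise_tail _ _ _ _ _ (p n)); first exact: cylinder_mkseq.
  exists p; apply/cylinder_rcons; rewrite size_mkseq.
  by split=> //; exact: cylinder_mkseq.
move=> k _ q /cylinder_rcons [qp _]; apply: VU; split=> //; apply: Np => i ltiN.
by rewrite qp ?nth_mkseq ?size_mkseq // (leq_trans ltiN).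
Qed.

Lemma baire_pi_tree :
  exists F : seq nat -> set (nat -> nat),
     pi_tree (subspace_open baire_open setT) setT F /\
     gg (cofin (@setT nat)) (Rise (subspace_open baire_open setT) setT F).
Proof.
exists cylinder; apply: pi_tree_cofin => [N| |p U _ /rise_cylinder [N riseN]].
- by exists N.
- split; first exact: cylinder_open.
  split; first by move=> x _; split; [exact: cylinder_sons|exact: cylinder_sons_disj].
  split; last by apply/seteqP; split.
  by apply: strict_branches_mkseq => g; exists g; exact: bigcap_cylinder.
- by exists N => n Nn _; exact: riseN.
Qed.

Section Interleave.
Variable T : Type.
Implicit Types f g : nat -> T.

Definition interleave f g k : T := if odd k then f k./2 else g k./2.

Lemma interleave_odd f g j : interleave f g j.*2.+1 = f j.
Proof. by rewrite /interleave /= odd_double /= uphalf_double. Qed.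

Lemma interleave_even f g j : interleave f g j.*2 = g j.
Proof. by rewrite /interleave odd_double doubleK. Qed.

Lemma interleave_pairwise (r : T -> T -> Prop) f g :
  (forall x y, r x y -> r y x) ->
  (forall i j, i != j -> r (f i) (f j)) -> (forall i j, i != j -> r (g i) (g j)) ->
  (forall i j, r (f i) (g j)) ->
  forall k k', k != k' -> r (interleave f g k) (interleave f g k').
Proof.
move=> r_sym rf rg rfg k k' kk'.
have half_neq : odd k = odd k' -> k./2 != k'./2.
  move=> okk'; apply: contraNneq kk' => hkk'.
  by rewrite -[k]odd_double_half okk' hkk' odd_double_half.
rewrite /interleave; case: ifP => ok; case: ifP => ok'.
- by apply/rf/half_neq; rewrite ok ok'.
- exact: rfg.
- exact/r_sym/rfg.
- by apply/rg/half_neq; rewrite ok ok'.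
Qed.

End Interleave.

Section HalfOpen.
Variable R : realDomainType.
Implicit Types (x : R) (I J : R * R) (c : nat -> R).

Definition hitv I : set R := [set x | I.1 <= x /\ x < I.2].

Definition separated I J := I.2 <= J.1 \/ J.2 <= I.1.

Lemma separated_sym I J : separated I J -> separated J I.
Proof. by rewrite /separated; tauto. Qed.

Lemma separated_hitv I J x : separated I J -> hitv I x -> hitv J x -> False.
Proof. by rewrite /separated /hitv /= => -[|] ? [? ?] [? ?]; lra. Qed.

Definition up_piece c k := (c k, c k.+1).
Definition down_piece c k := (c k.+1, c k).

Lemma up_piece_cover c x m : c 0%N <= x -> x < c m ->
  exists k, hitv (up_piece c k) x.
Proof.
move=> c0x xcm; have: exists n, x < c n by exists m.
case/ex_minnP=> -[|n] xcn minimal; first by rewrite ltNge c0x in xcn.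
exists n; split=> //; rewrite leNgt; apply/negP => /minimal.
by rewrite ltnn.
Qed.

Lemma down_piece_cover c x m : x < c 0%N -> c m <= x ->
  exists k, hitv (down_piece c k) x.
Proof.
move=> xc0 cmx; have: exists n, c n <= x by exists m.
case/ex_minnP=> -[|n] cnx minimal; first by rewrite leNgt xc0 in cnx.
exists n; split=> //; rewrite ltNge; apply/negP => /minimal.
by rewrite ltnn.
Qed.

Lemma up_piece_sep c : {homo c : m n / (m <= n)%N >-> m <= n} ->
  forall k k', k != k' -> separated (up_piece c k) (up_piece c k').
Proof. by move=> c_homo k k'; case: ltngtP => // kk' _; [left|right]; exact: c_homo. Qed.

Lemma down_piece_sep c : {homo c : m n / (m <= n)%N >-> n <= m} ->
  forall k k', k != k' -> separated (down_piece c k) (down_piece c k').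
Proof. by move=> c_anti k k'; case: ltngtP => // kk' _; [right|left]; exact: c_anti. Qed.

End HalfOpen.

Section Geometric.
Variable R : archiRealFieldType.
Implicit Types (a b d e x : R) (I J : R * R).

Lemma pow2V_gt0 k : 0 < 2 ^- k :> R.
Proof. by rewrite invr_gt0 exprn_gt0. Qed.

Lemma pow2VS k : 2 ^- k.+1 = 2 ^- k / 2 :> R.
Proof. by rewrite exprS invfM mulrC. Qed.

Lemma pow2V_le k k' : (k <= k')%N -> 2 ^- k' <= 2 ^- k :> R.
Proof. by move=> kk'; rewrite -!exprVn ler_wiXn2l // ?invr_ge0 ?invf_le1 ?ler1n. Qed.

Lemma pow2V_le1 k : 2 ^- k <= 1 :> R.
Proof. by rewrite -[leRHS]invr1 -(expr0 2) pow2V_le. Qed.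

Lemma pow2V_lt e : 0 < e -> exists K, forall k, (K <= k)%N -> 2 ^- k < e :> R.
Proof.
move=> e_gt0; exists (Num.truncn e^-1) => k Kk; apply: le_lt_trans (pow2V_le Kk) _.
rewrite -[ltRHS]invrK ltf_pV2 ?posrE ?invr_gt0 ?exprn_gt0 //.
apply: lt_le_trans (truncnS_gt _) _.
by rewrite -natrX ler_nat ltn_expl.
Qed.

Definition geo a b k : R := b - (b - a) * 2 ^- k.

Lemma geo0 a b : geo a b 0 = a.
Proof. by rewrite /geo expr0 invr1 mulr1 subKr. Qed.

Lemma geoS a b k : geo a b k.+1 - geo a b k = (b - a) * 2 ^- k.+1.
Proof. by rewrite /geo pow2VS; set t := 2 ^- k; field. Qed.

Lemma geo_homo a b : a <= b -> {homo geo a b : m n / (m <= n)%N >-> m <= n}.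
Proof. by move=> ab m n /pow2V_le; rewrite /geo; nra. Qed.

Lemma geo_anti a b : b <= a -> {homo geo a b : m n / (m <= n)%N >-> n <= m}.
Proof. by move=> ba m n /pow2V_le; rewrite /geo; nra. Qed.

Lemma geo_conv a b e : 0 < e ->
  exists K, forall k, (K <= k)%N -> `|b - geo a b k| < e.
Proof.
move=> e_gt0; have [->|ab] := eqVneq a b.
  by exists 0%N => k _; rewrite /geo subrr mul0r subr0 subrr normr0.
have ab_gt0 : 0 < `|b - a| by rewrite normr_gt0 subr_eq0 eq_sym.
have [K powK] := pow2V_lt (divr_gt0 e_gt0 ab_gt0); exists K => k Kk.
rewrite /geo opprB addrC subrK normrM [`|2 ^- k|]gtr0_norm ?pow2V_gt0 //.
by rewrite mulrC -ltr_pdivlMr // powK.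
Qed.

Definition small_subitv J I :=
  I.1 <= J.1 /\ J.1 < J.2 /\ J.2 <= I.2 /\ J.2 - J.1 <= (I.2 - I.1) / 2.

Lemma small_subitvW J a b a' b' : a <= a' -> b' <= b ->
  small_subitv J (a', b') -> small_subitv J (a, b).
Proof. by rewrite /small_subitv /= => ? ? [? [? [? ?]]]; do !split; lra. Qed.

Lemma right_piece_small a b k : a < b ->
  small_subitv (up_piece (geo a b) k) (a, b).
Proof.
move=> ab; have := geoS a b k; have := pow2V_le1 k; have := pow2V_gt0 k.+1.
have := geo_homo (ltW ab) (leq0n k); rewrite /small_subitv /= geo0 pow2VS.
by rewrite /geo; do !split; nra.
Qed.

Lemma right_piece_lt a b k : a < b -> (up_piece (geo a b) k).2 < b.
Proof. by move=> ab; have := pow2V_gt0 k.+1; rewrite /= /geo; nra. Qed.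

Lemma right_piece_tail a b p : p < b ->
  exists K, forall k, (K <= k)%N -> p <= (up_piece (geo a b) k).1.
Proof.
rewrite -subr_gt0 => /(geo_conv a b) [K geoK].
by exists K => k /geoK; rewrite /= ltr_norml; lra.
Qed.

Lemma right_piece_cover a b x : a <= x -> x < b ->
  exists k, hitv (up_piece (geo a b) k) x.
Proof.
move=> ax; rewrite -subr_gt0 => /(geo_conv a b) [K /(_ K (leqnn K))].
by rewrite ltr_norml => xK; apply: (@up_piece_cover _ _ _ K); rewrite ?geo0 //; lra.
Qed.

Lemma right_piece_sep a b k k' : a <= b -> k != k' ->
  separated (up_piece (geo a b) k) (up_piece (geo a b) k').
Proof. by move=> /geo_homo/up_piece_sep; apply. Qed.

Lemma left_piece_small d b k : d < b ->
  d < (down_piece (geo b d) k).1 /\ small_subitv (down_piece (geo b d) k) (d, b).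
Proof.
move=> db; have := geoS b d k; have := pow2V_le1 k; have := pow2V_gt0 k.+1.
have := geo_anti (ltW db) (leq0n k); rewrite /small_subitv /= geo0 pow2VS.
by rewrite /geo; do !split; nra.
Qed.

Lemma left_piece_cover d b x : d < x -> x < b ->
  exists k, hitv (down_piece (geo b d) k) x.
Proof.
rewrite -subr_gt0 => /(geo_conv b d) [K /(_ K (leqnn K))].
by rewrite ltr_norml => xK xb; apply: (@down_piece_cover _ _ _ K); rewrite ?geo0 //; lra.
Qed.

Lemma left_piece_sep d b k k' : d <= b -> k != k' ->
  separated (down_piece (geo b d) k) (down_piece (geo b d) k').
Proof. by move=> /geo_anti/down_piece_sep; apply. Qed.

Definition avoid_split a d b : nat -> R * R :=
  if a < d then interleave (up_piece (geo a d)) (down_piece (geo b d))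
  else down_piece (geo b d).

Lemma avoid_splitP a d b k :
  (a < d /\ exists j, avoid_split a d b k = up_piece (geo a d) j) \/
  exists j, avoid_split a d b k = down_piece (geo b d) j.
Proof.
rewrite /avoid_split /interleave; case: ifP => [ad|_]; last by right; exists k.
by case: ifP => _; [left; split=> //; exists k./2 | right; exists k./2].
Qed.

Lemma avoid_split_small a d b k : a <= d -> d < b ->
  ~ hitv (avoid_split a d b k) d /\ small_subitv (avoid_split a d b k) (a, b).
Proof.
move=> ad db; case: (avoid_splitP a d b k) => [[ad' [j ->]]|[j ->]].
  have piece_small := right_piece_small j ad'.
  split; last exact: small_subitvW (lexx a) (ltW db) piece_small.
  by move: piece_small; rewrite /small_subitv /hitv /= => -[_ [_ [? _]]] [_ ?]; lra.
have [dlo piece_small] := left_piece_small j db.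
split; last exact: small_subitvW ad (lexx b) piece_small.
by case=> ? _; lra.
Qed.

Lemma avoid_split_sep a d b k k' : a <= d -> d < b -> k != k' ->
  separated (avoid_split a d b k) (avoid_split a d b k').
Proof.
move=> ad db; rewrite /avoid_split.
case: ifP => [ad'|_]; last exact: left_piece_sep (ltW db).
apply: interleave_pairwise => [I J|i j|i j|i j]; first exact: separated_sym.
- exact: right_piece_sep (ltW ad').
- exact: left_piece_sep (ltW db).
- have [_ [_ [hi_le _]]] := right_piece_small i ad'.
  have [lo_gt _] := left_piece_small j db.
  by left; apply: le_trans hi_le (ltW lo_gt).
Qed.

Lemma avoid_split_cover a d b x : a <= d -> d < b -> a <= x -> x < b -> x != d ->
  exists k, hitv (avoid_split a d b k) x.
Proof.
move=> ad db ax xb; rewrite /avoid_split neq_lt => /orP [xd|dx].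
  have [j xj] := right_piece_cover ax xd.
  by exists j.*2.+1; rewrite (le_lt_trans ax xd) interleave_odd.
have [j xj] := left_piece_cover dx xb.
by case: ifP => _; [exists j.*2; rewrite interleave_even | exists j].
Qed.

Definition split_itv I (o : option R) : nat -> R * R :=
  if o is Some d then
    if (I.1 <= d) && (d < I.2) then avoid_split I.1 d I.2 else up_piece (geo I.1 I.2)
  else up_piece (geo I.1 I.2).

Variant split_itv_spec I o : (nat -> R * R) -> Prop :=
  | SplitAvoid d of o = Some d & hitv I d : split_itv_spec I o (avoid_split I.1 d I.2)
  | SplitRight of (forall d, o = Some d -> ~ hitv I d) :
      split_itv_spec I o (up_piece (geo I.1 I.2)).

Lemma split_itv_None I : split_itv I None = up_piece (geo I.1 I.2).
Proof. by []. Qed.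

Lemma split_itvP I o : split_itv_spec I o (split_itv I o).
Proof.
case: o => [d|]; last exact: SplitRight.
rewrite /split_itv; case: ifP => [/andP [Id dI]|notId]; first exact: SplitAvoid.
by apply: SplitRight => _ [<-] [Id dI]; move: notId; rewrite Id dI.
Qed.

Lemma split_itv_small I o k : I.1 < I.2 -> small_subitv (split_itv I o k) I.
Proof.
by move=> I12; case: split_itvP => [d _ [Id dI]|_];
  [case: (avoid_split_small k Id dI) | exact: right_piece_small].
Qed.

Lemma split_itv_sep I o k k' : I.1 < I.2 -> k != k' ->
  separated (split_itv I o k) (split_itv I o k').
Proof.
move=> I12; case: split_itvP => [d _ [Id dI]|_]; first exact: avoid_split_sep.
exact: right_piece_sep (ltW I12).
Qed.

Lemma split_itv_cover I o x : hitv I x -> o <> Some x ->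
  exists k, hitv (split_itv I o k) x.
Proof.
move=> [Ix xI] ox; case: split_itvP => [d od [Id dI]|_].
  by apply: avoid_split_cover => //; apply: contra_notN ox => /eqP ->.
exact: right_piece_cover.
Qed.

Lemma split_itv_avoid I d k : I.1 < I.2 -> ~ hitv (split_itv I (Some d) k) d.
Proof.
move=> I12; case: split_itvP => [_ [<-] [Id dI]|notI].
  by case: (avoid_split_small k Id dI).
have [? [_ [? _]]] := right_piece_small k I12.
by move=> [? ?]; apply: (notI d) => //; split=> /=; lra.
Qed.

Definition int_of_nat : nat -> int := interleave Negz Posz.

Definition unit_piece k : R * R := ((int_of_nat k)%:~R, (int_of_nat k)%:~R + 1).

Lemma unit_piece_cover x : exists k, hitv (unit_piece k) x.
Proof.
have /andP [fx xf] := floor_itv x; rewrite intrD1 in xf.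
have [k fk] : exists k, Num.floor x = int_of_nat k.
  case: (Num.floor x) => n; first by exists n.*2; rewrite /int_of_nat interleave_even.
  by exists n.*2.+1; rewrite /int_of_nat interleave_odd.
by exists k; rewrite /hitv /= -fk.
Qed.

Lemma unit_piece_sep k k' : k != k' -> separated (unit_piece k) (unit_piece k').
Proof.
move=> kk'; have : int_of_nat k != int_of_nat k'.
  apply: (@interleave_pairwise _ (fun u v => u != v)) kk' => // u v.
  by rewrite eq_sym.
rewrite /separated /= neq_lt => /orP [] lt; [left|right];
  by rewrite -intrD1 ler_int lezD1.
Qed.

End Geometric.

Section Sorgenfrey.
Variable R : realType.

Lemma hitv_open (I : R * R) : sorgenfrey_open (hitv I).
Proof. by move=> p [Ip pI]; exists I.2; split=> // x [px xI]; split=> //; lra. Qed.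

Lemma nested_itv_point (a b : nat -> R) :
  (forall n, a n < b n) -> (forall n, a n <= a n.+1 /\ b n.+1 <= b n) ->
  (forall e, 0 < e -> exists n, b n - a n < e) ->
  (forall N, exists n, (N <= n)%N /\ b n.+1 < b n) ->
  exists L, \bigcap_n hitv (a n, b n) = [set L].
Proof.
move=> ab nested shrink drop.
have a_homo : {homo a : m n / (m <= n)%N >-> m <= n}.
  by apply: homo_leq => [//|? ? ?|n]; [exact: le_trans | exact: (nested n).1].
have b_anti : {homo b : m n / (m <= n)%N >-> n <= m}.
  apply: homo_leq => [//|y x z xy yz|n]; [exact: le_trans yz xy | exact: (nested n).2].
have a_le_b i j : a i <= b j.
  apply: le_trans (a_homo _ _ (leq_maxl i j)) _.
  exact: le_trans (ltW (ab _)) (b_anti _ _ (leq_maxr i j)).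
have a_nonempty : range a !=set0 by exists (a 0%N), 0%N.
have a_sup : has_sup (range a) by split=> //; exists (b 0%N) => _ [i _ <-].
have aL n : a n <= sup (range a) by apply: sup_upper_bound => //; exists n.
have Lb n : sup (range a) < b n.
  have [m [nm bm]] := drop n.
  apply: le_lt_trans (lt_le_trans bm (b_anti _ _ nm)).
  by apply: ge_sup => // _ [i _ <-].
exists (sup (range a)); apply/seteqP; split=> [y yab|_ ->]; last first.
  by move=> n _; exact: conj (aL n) (Lb n).
apply: contrapT => /eqP; rewrite -subr_eq0 -normr_gt0 => /shrink [n].
have [/= ? ?] := yab n I; have := aL n; have := Lb n.
by rewrite ltr_normr => ? ? /orP []; lra.
Qed.

Variable X : set R.
Variable sched : nat -> option R.

Fixpoint descend (lvl : nat) (I : R * R) (s : seq nat) : R * R :=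
  if s is k :: s' then descend lvl.+1 (split_itv I (sched lvl) k) s' else I.

(* The root interval (0, 1) is a dummy: the root leaf is X itself. *)
Definition node_itv (s : seq nat) : R * R :=
  if s is k :: s' then descend 1 (unit_piece R k) s' else (0, 1).

Definition leaf (s : seq nat) : set R :=
  if s is [::] then X else X `&` hitv (node_itv s).

Lemma descend_rcons lvl I s k :
  descend lvl I (rcons s k) = split_itv (descend lvl I s) (sched (lvl + size s)) k.
Proof. by elim: s lvl I => [|k' s IHs] lvl I /=; rewrite ?addn0 // IHs addSnnS. Qed.

Lemma node_itv_rcons v k : v != [::] ->
  node_itv (rcons v k) = split_itv (node_itv v) (sched (size v)) k.
Proof. by case: v => // k' s _; rewrite /= descend_rcons. Qed.

Lemma leaf_cons v : v != [::] -> leaf v = X `&` hitv (node_itv v).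
Proof. by case: v. Qed.

Lemma leaf_rcons v k : leaf (rcons v k) = X `&` hitv (node_itv (rcons v k)).
Proof. by case: v. Qed.

Lemma node_itv_small v : v != [::] ->
  (node_itv v).1 < (node_itv v).2 /\ (node_itv v).2 - (node_itv v).1 <= 2 ^- (size v).-1.
Proof.
elim/last_ind: v => // v k IHv _; rewrite size_rcons /=.
have [->|v0] := eqVneq v [::]; first by rewrite /= expr0 invr1; split; lra.
have [lt len] := IHv v0; rewrite node_itv_rcons //.
have [_ [lt' [_ len']]] := split_itv_small (sched (size v)) k lt.
split=> //; apply: le_trans len' _.
by rewrite -[in 2 ^- _](prednK (_ : 0 < size v)%N) ?lt0n ?size_eq0 // pow2VS; lra.
Qed.

Lemma leaf_open v : subspace_open (@sorgenfrey_open R) X (leaf v).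
Proof.
case: v => [|k s]; last first.
  by exists (hitv (node_itv (k :: s))); split; [exact: hitv_open | rewrite setIC].
exists setT; split; last by rewrite setTI.
by move=> p _; exists (p + 1); split; [lra|].
Qed.

Lemma leaf_sons_disj v s s' : sons v s -> sons v s' -> s <> s' ->
  leaf s `&` leaf s' = set0.
Proof.
move=> [k ->] [k' ->] neq; apply/seteqP; split=> // y [].
have kk' : k != k' by apply: contra_notN neq => /eqP ->.
rewrite !leaf_rcons => -[_ +] [_]; have [->|v0] := eqVneq v [::].
  exact: separated_hitv (unit_piece_sep R kk').
rewrite !node_itv_rcons //; have [lt _] := node_itv_small v0.
exact: separated_hitv (split_itv_sep _ lt kk').
Qed.

Hypothesis sched_notin : forall n d, sched n = Some d -> ~ X d.
Hypothesis sched_exhaustive : forall y, ~ X y -> exists n, (0 < n)%N /\ sched n = Some y.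
Hypothesis sched_None : forall N, exists n, (N <= n)%N /\ sched n = None.

Lemma leaf_sons v : leaf v = \bigcup_(s in sons v) leaf s.
Proof.
apply/seteqP; split=> [y vy|y [_ [k ->]]]; last first.
  rewrite leaf_rcons => -[Xy yk]; have [->//|v0] := eqVneq v [::].
  rewrite leaf_cons //; split=> //; move: yk; rewrite node_itv_rcons //.
  have [lt _] := node_itv_small v0.
  have [? [_ [? _]]] := split_itv_small (sched (size v)) k lt.
  by move=> [? ?]; split; lra.
have [v0|v0] := eqVneq v [::].
  by subst v; have [k yk] := unit_piece_cover y; exists [:: k]; [exists k | split].
move: vy; rewrite leaf_cons // => -[Xy yv]; have [lt _] := node_itv_small v0.
have [k yk] := split_itv_cover (o := sched (size v)) yv (fun e => sched_notin e Xy).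
by exists (rcons v k); [exists k | rewrite leaf_rcons node_itv_rcons].
Qed.

Lemma bigcap_leaf g : exists L, \bigcap_n leaf (mkseq g n) = [set L].
Proof.
pose J n := node_itv (mkseq g n.+1).
have J_S n : J n.+1 = split_itv (J n) (sched n.+1) (g n.+1).
  by rewrite /J mkseqS node_itv_rcons ?size_mkseq.
have J_small n : (J n).1 < (J n).2 /\ (J n).2 - (J n).1 <= 2 ^- n.
  by have := node_itv_small (_ : mkseq g n.+1 != [::]); rewrite size_mkseq; apply.
have [L JL] : exists L, \bigcap_n hitv (J n) = [set L].
  apply: (@nested_itv_point (fun n => (J n).1) (fun n => (J n).2)) => [n|n|e e0|N].
  - exact: (J_small n).1.
  - have [? [_ [? _]]] := split_itv_small (sched n.+1) (g n.+1) (J_small n).1.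
    by rewrite J_S.
  - have [K powK] := pow2V_lt e0; exists K.
    by have := (J_small K).2; have := powK K (leqnn K); lra.
  - have [[|m] [Nm sm]] := sched_None N.+1 => //; exists m; split=> //.
    by rewrite J_S sm split_itv_None; apply: right_piece_lt; exact: (J_small m).1.
have XL : X L.
  apply: contrapT => /sched_exhaustive [[|m] [// _ sm]].
  have : [set L] L by []; rewrite -JL => /(_ m.+1 I).
  by rewrite J_S sm; apply: split_itv_avoid; exact: (J_small m).1.
exists L; apply/seteqP; split=> [y yg|_ ->].
  by rewrite -JL => n _; have [] := yg n.+1 I.
move=> [|n] _ //; split=> //.
by have : [set L] L by []; rewrite -JL; apply.
Qed.

Lemma leaf_nonempty v : leaf v !=set0.
Proof.
have [L vL] := bigcap_leaf (nth 0%N v); exists L.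
by have : [set L] L by []; rewrite -vL => /(_ (size v) I); rewrite mkseq_nth.
Qed.

Lemma leaf_level p : X p -> forall n, exists v, size v = n /\ leaf v p.
Proof.
move=> Xp; elim=> [|n [v [<- vp]]]; first by exists [::].
by move: vp; rewrite leaf_sons => -[_ [k ->] vkp]; exists (rcons v k); rewrite size_rcons.
Qed.

Lemma rise_leaf p U : X p -> nbhd_in (subspace_open (@sorgenfrey_open R) X) X p U ->
  exists N, forall n, (N <= n)%N -> sched n = None -> rise leaf p U n.
Proof.
move=> Xp [_ [_ [[V [openV ->]] [[Vp _] VU]]]]; have [b [pb pbV]] := openV p Vp.
have [K powK] : exists K, forall k, (K <= k)%N -> 2 ^- k < b - p.
  by apply: pow2V_lt; rewrite subr_gt0.
exists K.+1 => n Kn sn; have [v [szv vp]] := leaf_level Xp n; subst n.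
have v0 : v != [::] by rewrite -size_eq0 -lt0n (leq_trans _ Kn).
move: (vp); rewrite leaf_cons // => -[_ [pv vpb]].
have [lt len] := node_itv_small v0.
have := powK (size v).-1; rewrite -ltnS prednK ?lt0n ?size_eq0 // => /(_ Kn) lenb.
have [K' tail] := right_piece_tail (node_itv v).1 vpb.
apply: (@rise_tail _ _ _ _ _ K') => // [|k Kk y]; first exact: leaf_nonempty.
rewrite leaf_rcons node_itv_rcons // sn split_itv_None => -[Xy [yk1 yk2]].
have [_ [_ [? _]]] := right_piece_small k lt; have := tail k Kk.
by move=> ?; apply: VU; split=> //; apply: pbV; split; lra.
Qed.

Lemma leaf_tree : baire_foliage_tree (subspace_open (@sorgenfrey_open R) X) X leaf.
Proof.
split; first exact: leaf_open.
split; first by move=> x _; split; [exact: leaf_sons | exact: leaf_sons_disj].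
by split=> //; apply: strict_branches_mkseq; exact: bigcap_leaf.
Qed.

Lemma sorgenfrey_pi_tree (B : set nat) :
  (forall N, exists n, (N <= n)%N /\ B n) -> (forall n, B n -> sched n = None) ->
  pi_tree (subspace_open (@sorgenfrey_open R) X) X leaf /\
  gg (cofin B) (Rise (subspace_open (@sorgenfrey_open R) X) X leaf).
Proof.
move=> Bunb Bsched; apply: pi_tree_cofin leaf_tree _ => // p U Xp.
by move=> /(rise_leaf Xp) [N riseN]; exists N => n Nn /Bsched; exact: riseN.
Qed.

End Sorgenfrey.

Lemma sorgenfrey_line_pi_tree (R : realType) :
  exists G : seq nat -> set R,
    pi_tree (subspace_open (@sorgenfrey_open R) setT) setT G /\
    gg (cofin (@setT nat)) (Rise (subspace_open (@sorgenfrey_open R) setT) setT G).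
Proof.
exists (leaf setT (fun=> None)).
by apply: sorgenfrey_pi_tree => [n d|y []|N|N|n _] //; exists N.
Qed.

Lemma cocountable_sorgenfrey_pi_tree (R : realType) (X : set R) : countable (~` X) ->
  exists H : seq nat -> set R,
    pi_tree (subspace_open (@sorgenfrey_open R) X) X H /\
    gg (cofin [set m : nat | exists n : nat, m = (2 * n + 1)%N])
       (Rise (subspace_open (@sorgenfrey_open R) X) X H).
Proof.
move=> /countable_injP [f finj].
(* Level 2(j + 1) avoids the point of ~` X with code j. *)
pose sched n := if odd n then None else
  if pselect (exists y, ~ X y /\ f y = n./2.-1) is left e
  then Some (projT1 (cid e)) else None.
have odd_sched N : (N <= N.*2.+1)%N /\ sched N.*2.+1 = None.
  by rewrite /sched /= odd_double -addnn ltnW // ltnS leq_addr.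
exists (leaf X sched); apply: sorgenfrey_pi_tree => [n d|y Xy|N|N|_ [n ->]].
- rewrite /sched; case: ifP => // _; case: pselect => // e [<-].
  exact: (projT2 (cid e)).1.
- exists (f y).+1.*2; split=> //; rewrite /sched odd_double doubleK /=.
  case: pselect => [e|]; last by case; exists y.
  have [Xz fz] := projT2 (cid e); congr Some.
  by apply: finj; rewrite ?inE.
- by exists N.*2.+1.
- by exists N.*2.+1; split; [exact: (odd_sched N).1 | exists N; rewrite addn1 mul2n].
- by rewrite addn1 mul2n; exact: (odd_sched n).2.
Qed.

Theorem lemma19 (R : realType) :
  (* (a) Baire space *)
  (exists F : seq nat -> set (nat -> nat),
     pi_tree (subspace_open baire_open setT) setT F /\
     gg (cofin (@setT nat)) (Rise (subspace_open baire_open setT) setT F)) /\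
  (* (b) Sorgenfrey line *)
  (exists G : seq nat -> set R,
     pi_tree (subspace_open (@sorgenfrey_open R) setT) setT G /\
     gg (cofin (@setT nat))
        (Rise (subspace_open (@sorgenfrey_open R) setT) setT G)) /\
  (* (c) co-countable subspaces of the Sorgenfrey line *)
  (forall X : set R, countable (~` X) ->
     exists H : seq nat -> set R,
       pi_tree (subspace_open (@sorgenfrey_open R) X) X H /\
       gg (cofin [set m : nat | exists n : nat, m = (2 * n + 1)%N])
          (Rise (subspace_open (@sorgenfrey_open R) X) X H)).
Proof.
split; first exact: baire_pi_tree.
split; first exact: sorgenfrey_line_pi_tree.
exact: cocountable_sorgenfrey_pi_tree.
Qed.
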